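(* For every $m\in\mathbb{N}_0$, $$\frac{1}{m!}\int_1^{+\infty}\frac{\{x\}^2\log^m x}{x^2}\,\mathrm{d}x=1-(-1)^m+2\sum_{k=0}^{m+1}\frac{(-1)^k\zeta^{(k)}(0)}{k!}-\sum_{k=0}^m\frac{\gamma_k}{k!}.$$
   Context: $\{x\}=x-\lfloor x\rfloor$; $\zeta^{(k)}$ is the $k$-th derivative of the Riemann zeta function; $\gamma_k=\lim_{N\to\infty}\left(\sum_{j=1}^N\frac{\log^k j}{j}-\frac{\log^{k+1}N}{k+1}\right)$ are the Stieltjes constants. *)

From Stdlib Require Import Reals Arith Factorial.
From Coquelicot Require Import Coquelicot.
Open Scope R_scope.

Definition int_1_inf (f : R -> R) : R :=
  RInt_gen f (at_point 1) (Rbar_locally p_infty).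

(* Riemann zeta function on the real line near s = 0 (s > -1, s <> 1),
   given by its standard (Euler-Maclaurin) analytic continuation:
   zeta(s) = 1/(s-1) + 1/2 + s/12
             - s(s+1)/2 * int_1^oo ({x}^2 - {x} + 1/6) x^(-s-2) dx,
   which agrees with sum_n n^(-s) for s > 1. *)
Definition zeta (s : R) : R :=
  1 / (s - 1) + 1 / 2 + s / 12
  - s * (s + 1) / 2 *
    int_1_inf (fun x => (frac_part x ^ 2 - frac_part x + 1 / 6) * Rpower x (- s - 2)).

(* Stieltjes constants:
   gamma_k = lim_N ( sum_{j=1}^N log^k j / j - log^(k+1) N / (k+1) ).
   The sequence below is indexed by N-1 (N = n+1 >= 1). *)
Definition stieltjes (k : nat) : R :=
  real (Lim_seq (fun n : nat =>
    sum_f_R0 (fun j => ln (INR (j + 1)) ^ k / INR (j + 1)) n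
    - ln (INR (n + 1)) ^ (k + 1) / INR (k + 1))).

From Stdlib Require Import Reals Factorial Lra Lia.
From Coquelicot Require Import Coquelicot.
Open Scope R_scope.

(* Write {x}^2 = B_2({x}) + {x} - 1/6 with B_2(y) = y^2 - y + 1/6; the constant
   part contributes int_1^oo log^m x / x^2 dx = m!.

   On [j, j+1] the {x}-part is (x - j) log^m x / x^2, integrated by parts m times;
   summing over j <= n yields m! - m! sum_(k <= m) (sum_(j <= n) log^k j / j
   - log^(k+1) n / (k+1)) / k!, whose limit is m! (1 - sum_(k <= m) gamma_k / k!).

   Expanding x^(-s) = exp (-s log x) shows that J(s) = int_1^oo B_2({x}) x^(-s-2) dx
   has Taylor coefficients (-1)^k / k! int_1^oo B_2({x}) log^k x / x^2 at 0.  Through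
   zeta(s) = 1/(s-1) + 1/2 + s/12 - s(s+1)/2 J(s) these determine zeta^(k)(0) / k!,
   and in sum_(k <= m+1) (-1)^k zeta^(k)(0) / k! the J-coefficients telescope,
   leaving only the B_2-part. *)

Definition is_RInt_1_inf (f : R -> R) (l : R) : Prop :=
  (forall b, 1 <= b -> ex_RInt f 1 b) /\ is_lim (fun b => RInt f 1 b) p_infty l.

Lemma is_RInt_1_inf_unique (f : R -> R) (l : R) : is_RInt_1_inf f l -> int_1_inf f = l.
Proof.
  intros [Hex Hlim]. unfold int_1_inf.
  refine (is_RInt_gen_unique (V:=R_CompleteNormedModule) _ _ _).
  intros P HP.
  apply Filter_prod with (fun a => a = 1) (fun b => 1 < b /\ P (RInt f 1 b)).
  - reflexivity.
  - apply filter_and; [exists 1; tauto | exact (Hlim P HP)].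
  - intros a b -> [Hb HPb]. exists (RInt f 1 b). split; [|exact HPb].
    apply (RInt_correct (V:=R_CompleteNormedModule)), Hex. lra.
Qed.

Lemma is_RInt_1_inf_int (f : R -> R) :
  (exists l, is_RInt_1_inf f l) -> is_RInt_1_inf f (int_1_inf f).
Proof. intros [l Hl]. now rewrite (is_RInt_1_inf_unique f l Hl). Qed.

Lemma is_RInt_1_inf_seq (f : R -> R) (l : R) :
  is_RInt_1_inf f l -> is_lim_seq (fun n => RInt f 1 (INR n)) l.
Proof.
  intros [_ Hlim]. apply (is_lim_comp_seq _ INR p_infty l Hlim).
  - exists 0%nat. discriminate.
  - apply is_lim_seq_INR.
Qed.

Lemma is_RInt_1_inf_ext (f g : R -> R) (l : R) :
  (forall x, 1 < x -> f x = g x) -> is_RInt_1_inf f l -> is_RInt_1_inf g l.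
Proof.
  intros Hfg [Hex Hlim]. split.
  - intros b Hb. apply ex_RInt_ext with f; [|now apply Hex].
    intros x Hx. rewrite Rmin_left in Hx by lra. apply Hfg. lra.
  - apply is_lim_ext_loc with (fun b => RInt f 1 b); [|exact Hlim].
    exists 1. intros b Hb. apply RInt_ext. intros x Hx.
    rewrite Rmin_left in Hx by lra. apply Hfg. lra.
Qed.

Lemma is_RInt_1_inf_plus (f g : R -> R) (lf lg : R) :
  is_RInt_1_inf f lf -> is_RInt_1_inf g lg -> is_RInt_1_inf (fun x => f x + g x) (lf + lg).
Proof.
  intros [Hf Hlf] [Hg Hlg]. split.
  - intros b Hb. apply (ex_RInt_plus (V:=R_NormedModule)); auto.
  - apply is_lim_ext_loc with (fun b => RInt f 1 b + RInt g 1 b).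
    + exists 1. intros b Hb. symmetry.
      apply (RInt_plus (V:=R_CompleteNormedModule)); [apply Hf|apply Hg]; lra.
    + now apply is_lim_plus'.
Qed.

Lemma is_RInt_1_inf_scal (f : R -> R) (a l : R) :
  is_RInt_1_inf f l -> is_RInt_1_inf (fun x => a * f x) (a * l).
Proof.
  intros [Hf Hl]. split.
  - intros b Hb. apply (ex_RInt_scal (V:=R_NormedModule)); auto.
  - apply is_lim_ext_loc with (fun b => a * RInt f 1 b).
    + exists 1. intros b Hb. symmetry. apply (RInt_scal (V:=R_CompleteNormedModule)), Hf. lra.
    + exact (is_lim_scal_l _ a p_infty l Hl).
Qed.

Lemma is_RInt_1_inf_minus (f g : R -> R) (lf lg : R) :
  is_RInt_1_inf f lf -> is_RInt_1_inf g lg -> is_RInt_1_inf (fun x => f x - g x) (lf - lg).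
Proof.
  intros Hf Hg. apply is_RInt_1_inf_ext with (fun x => f x + (-1) * g x); [intros; ring|].
  replace (lf - lg) with (lf + (-1) * lg) by ring.
  now apply is_RInt_1_inf_plus, is_RInt_1_inf_scal.
Qed.

Lemma is_RInt_1_inf_derive (F f : R -> R) (L : R) :
  (forall x, 1 <= x -> is_derive F x (f x)) -> (forall x, 1 <= x -> continuous f x) ->
  is_lim F p_infty L -> is_RInt_1_inf f (L - F 1).
Proof.
  intros Hd Hc Hl.
  assert (HI : forall b, 1 <= b -> is_RInt f 1 b (F b - F 1)).
  { intros b Hb. apply (is_RInt_derive (V:=R_CompleteNormedModule));
      intros x Hx; rewrite Rmin_left in Hx by lra; [apply Hd | apply Hc]; lra. }
  split.
  - intros b Hb. eexists. now apply HI.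
  - apply is_lim_ext_loc with (fun b => F b - F 1).
    + exists 1. intros b Hb. symmetry. apply is_RInt_unique, HI. lra.
    + apply is_lim_minus'; [exact Hl | apply is_lim_const].
Qed.

Lemma RInt_abs_le (f G : R -> R) (a b : R) :
  a <= b -> ex_RInt f a b -> ex_RInt G a b ->
  (forall x, a <= x <= b -> Rabs (f x) <= G x) -> Rabs (RInt f a b) <= RInt G a b.
Proof.
  intros Hab Hf HG Hbound. apply Rabs_le_between. split.
  - rewrite <- (RInt_opp (V:=R_CompleteNormedModule)) by exact HG.
    apply RInt_le; auto; [apply (ex_RInt_opp (V:=R_NormedModule)); exact HG|].
    intros x Hx. destruct (proj1 (Rabs_le_between _ _) (Hbound x ltac:(lra))); assumption.
  - apply RInt_le; auto. intros x Hx. apply Rabs_le_between, Hbound. lra.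
Qed.

Lemma RInt_Chasles_R (f : R -> R) a b c :
  ex_RInt f a b -> ex_RInt f b c -> RInt f a b + RInt f b c = RInt f a c.
Proof. exact (RInt_Chasles (V:=R_CompleteNormedModule) f a b c). Qed.

Lemma ex_RInt_1_inf_dominated (f G : R -> R) (lG : R) :
  (forall b, 1 <= b -> ex_RInt f 1 b) -> (forall x, 1 <= x -> Rabs (f x) <= G x) ->
  is_RInt_1_inf G lG -> exists l, is_RInt_1_inf f l.
Proof.
  intros Hf Hbound [HG HlG].
  assert (Hcauchy := proj2 (filterlim_locally_cauchy (U:=R_CompleteSpace)
                        (F:=Rbar_locally p_infty) (fun b => RInt G 1 b)) (ex_intro _ lG HlG)).
  destruct (proj1 (filterlim_locally_cauchy (U:=R_CompleteSpace) (F:=Rbar_locally p_infty)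
                     (fun b => RInt f 1 b))) as [l Hl]; [|now exists l].
  intros eps. destruct (Hcauchy eps) as [Q [HQ HQeps]].
  exists (fun b => Q b /\ 1 <= b).
  split; [apply filter_and; [exact HQ | now exists 1; intros; lra]|].
  (* the tail [u, v] of [f] is dominated by the tail of [G], which is small *)
  assert (Htail : forall u v, 1 <= u <= v -> Q u -> Q v -> Rabs (RInt f 1 v - RInt f 1 u) < eps).
  { intros u v Huv Qu Qv. specialize (HQeps u v Qu Qv).
    assert (Hsplit : forall h : R -> R, (forall b, 1 <= b -> ex_RInt h 1 b) ->
              RInt h 1 v - RInt h 1 u = RInt h u v).
    { intros h Hh. rewrite <- (RInt_Chasles_R h 1 u v); [ring| |].
      - apply (ex_RInt_Chasles_1 (V:=R_CompleteNormedModule)) with v; [lra | apply Hh; lra].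
      - apply (ex_RInt_Chasles_2 (V:=R_CompleteNormedModule)) with 1; [lra | apply Hh; lra]. }
    change (Rabs (RInt G 1 v - RInt G 1 u) < eps) in HQeps.
    rewrite Hsplit in HQeps |- * by assumption.
    eapply Rle_lt_trans; [|eapply Rle_lt_trans; [apply Rle_abs | exact HQeps]].
    apply RInt_abs_le; try lra.
    - apply (ex_RInt_Chasles_2 (V:=R_CompleteNormedModule)) with 1; [lra | apply Hf; lra].
    - apply (ex_RInt_Chasles_2 (V:=R_CompleteNormedModule)) with 1; [lra | apply HG; lra].
    - intros x Hx. apply Hbound. lra. }
  intros u v [Qu Hu] [Qv Hv]. change (Rabs (RInt f 1 v - RInt f 1 u) < eps).
  destruct (Rle_lt_dec u v); [now apply Htail|].
  rewrite Rabs_minus_sym. apply Htail; auto; lra.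
Qed.

Lemma is_RInt_1_inf_abs_le (f G : R -> R) (l lG : R) :
  (forall x, 1 <= x -> Rabs (f x) <= G x) ->
  is_RInt_1_inf f l -> is_RInt_1_inf G lG -> Rabs l <= lG.
Proof.
  intros Hbound Hf HG.
  apply (is_lim_seq_le_loc (fun n => Rabs (RInt f 1 (INR n))) (fun n => RInt G 1 (INR n))
           (Rabs l) lG).
  - exists 1%nat. intros n Hn. apply le_INR in Hn. simpl in Hn.
    apply RInt_abs_le; [lra | apply Hf | apply HG | intros x Hx; apply Hbound]; lra.
  - apply (is_lim_seq_abs _ l), is_RInt_1_inf_seq, Hf.
  - apply is_RInt_1_inf_seq, HG.
Qed.

Lemma exp_ge_pow_div_fact y n : 0 <= y -> y ^ n / INR (fact n) <= exp y.
Proof.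
  intros Hy. destruct n as [|n].
  - pose proof (exp_ineq1_le y). simpl. lra.
  - apply Rle_trans with (2 := exp_ge_taylor y (S n) Hy). cbn [sum_f_R0].
    assert (0 <= sum_f_R0 (fun k => y ^ k / INR (fact k)) n); [|lra].
    apply cond_pos_sum. intros k.
    apply Rdiv_le_0_compat; [now apply pow_le | apply INR_fact_lt_0].
Qed.

Lemma is_lim_exp_mul_pow eps n :
  0 < eps -> is_lim (fun t => exp (- eps * t) * t ^ n) p_infty 0.
Proof.
  intros Heps. set (K := INR (fact (S n)) / eps ^ S n).
  apply is_lim_le_le_loc with (f := fun _ => 0) (g := fun t => K * / t).
  - exists 1. intros t Ht. split.
    + apply Rmult_le_pos; [left; apply exp_pos | apply pow_le; lra].
    + (* [exp (eps t) >= (eps t)^(n+1) / (n+1)!] *)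
      pose proof (exp_ge_pow_div_fact (eps * t) (S n) ltac:(nra)) as Hexp.
      pose proof (INR_fact_lt_0 (S n)) as Hfact.
      assert (Hpow : 0 < eps ^ S n * t ^ S n) by (apply Rmult_lt_0_compat; apply pow_lt; lra).
      rewrite Rpow_mult_distr in Hexp.
      replace (- eps * t) with (- (eps * t)) by ring. rewrite exp_Ropp.
      replace (K * / t) with (t ^ n / (eps ^ S n * t ^ S n / INR (fact (S n))))
        by (unfold K; rewrite <- (tech_pow_Rmult t n); field;
            repeat split; try apply pow_nonzero; lra).
      rewrite Rmult_comm. apply Rmult_le_compat_l; [apply pow_le; lra|].
      apply Rinv_le_contravar; [apply Rdiv_lt_0_compat|]; lra.
  - apply is_lim_const.
  - replace (Finite 0) with (Rbar_mult K (Rbar_inv p_infty)) by (simpl; f_equal; ring).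
    apply is_lim_scal_l, is_lim_inv; [apply is_lim_id | discriminate].
Qed.

Lemma is_lim_exp_mul_ln_pow eps n :
  0 < eps -> is_lim (fun x => exp (- eps * ln x) * ln x ^ n) p_infty 0.
Proof.
  intros Heps. apply (is_lim_comp (fun t => exp (- eps * t) * t ^ n) ln p_infty 0 p_infty).
  - now apply is_lim_exp_mul_pow.
  - apply is_lim_ln_p.
  - exists 0. discriminate.
Qed.

(* An antiderivative of [ln x ^ j * x ^ (-c)], obtained by integrating by parts [j] times. *)
Fixpoint powlog_prim (c : R) (j : nat) (x : R) : R :=
  match j with
  | O => - exp ((1 - c) * ln x) / (c - 1)
  | S i => INR (S i) / (c - 1) * powlog_prim c i x
           - exp ((1 - c) * ln x) * ln x ^ S i / (c - 1)
  end.

Lemma exp_1_sub_mul_ln c x : 0 < x -> exp ((1 - c) * ln x) = x * exp (- c * ln x).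
Proof.
  intros Hx. replace ((1 - c) * ln x) with (ln x + - c * ln x) by ring.
  now rewrite exp_plus, exp_ln.
Qed.

Lemma is_derive_powlog_prim c j x :
  1 < c -> 0 < x -> is_derive (powlog_prim c j) x (ln x ^ j * exp (- c * ln x)).
Proof.
  intros Hc Hx. induction j as [|j IH].
  - simpl. auto_derive; [lra|]. rewrite exp_1_sub_mul_ln by lra. field. lra.
  - assert (Hlast : is_derive (fun y => exp ((1 - c) * ln y) * ln y ^ S j / (c - 1)) x
      (((1 - c) * (1 * / x) * exp ((1 - c) * ln x) * ln x ^ S j +
        exp ((1 - c) * ln x) * (1 * / x * (INR (S j) * ln x ^ j))) / (c - 1)))
      by (auto_derive; [lra | reflexivity]).
    replace (ln x ^ S j * exp (- c * ln x)) with
      (INR (S j) / (c - 1) * (ln x ^ j * exp (- c * ln x))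
       - ((1 - c) * (1 * / x) * exp ((1 - c) * ln x) * ln x ^ S j +
          exp ((1 - c) * ln x) * (1 * / x * (INR (S j) * ln x ^ j))) / (c - 1))
      by (rewrite exp_1_sub_mul_ln by lra; field; lra).
    exact (is_derive_minus _ _ x _ _ (is_derive_scal _ x _ _ IH) Hlast).
Qed.

Lemma is_lim_powlog_prim c j : 1 < c -> is_lim (powlog_prim c j) p_infty 0.
Proof.
  intros Hc.
  assert (Hterm : forall i, is_lim (fun x => - / (c - 1) * (exp (- (c - 1) * ln x) * ln x ^ i))
                    p_infty (- / (c - 1) * 0))
    by (intros i; apply (is_lim_scal_l _ _ p_infty 0), is_lim_exp_mul_ln_pow; lra).
  induction j as [|j IH].
  - replace (Finite 0) with (Finite (- / (c - 1) * 0)) by (f_equal; ring).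
    apply (is_lim_ext (fun x => - / (c - 1) * (exp (- (c - 1) * ln x) * ln x ^ 0)));
      [|apply Hterm].
    intros x. simpl. replace (- (c - 1) * ln x) with ((1 - c) * ln x) by ring. field. lra.
  - apply is_lim_ext with
      (fun x => INR (S j) / (c - 1) * powlog_prim c j x
                + - / (c - 1) * (exp (- (c - 1) * ln x) * ln x ^ S j)).
    { intros x. cbn [powlog_prim].
      replace (- (c - 1) * ln x) with ((1 - c) * ln x) by ring. field. lra. }
    replace (Finite 0) with (Rbar_plus (INR (S j) / (c - 1) * 0) (- / (c - 1) * 0))
      by (simpl; f_equal; ring).
    apply is_lim_plus'; [apply (is_lim_scal_l _ _ p_infty 0), IH | apply Hterm].
Qed.

Lemma powlog_prim_1 c j : 1 < c -> powlog_prim c j 1 = - INR (fact j) / (c - 1) ^ S j.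
Proof.
  intros Hc. induction j as [|j IH].
  - simpl. rewrite ln_1, Rmult_0_r, exp_0. field. lra.
  - cbn [powlog_prim]. rewrite IH, ln_1, (pow_i (S j)) by lia.
    rewrite fact_simpl, mult_INR, <- (tech_pow_Rmult (c - 1) (S j)).
    assert ((c - 1) ^ S j <> 0) by (apply pow_nonzero; lra).
    field. split; lra.
Qed.

Lemma is_RInt_1_inf_powlog c j : 1 < c ->
  is_RInt_1_inf (fun x => ln x ^ j * exp (- c * ln x)) (INR (fact j) / (c - 1) ^ S j).
Proof.
  intros Hc.
  replace (INR (fact j) / (c - 1) ^ S j) with (0 - powlog_prim c j 1)
    by (rewrite powlog_prim_1 by lra; field; apply pow_nonzero; lra).
  apply is_RInt_1_inf_derive.
  - intros x Hx. apply is_derive_powlog_prim; lra.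
  - intros x Hx. apply (ex_derive_continuous (V:=R_NormedModule)). auto_derive. lra.
  - now apply is_lim_powlog_prim.
Qed.

Lemma frac_part_between (n : nat) x : INR n < x < INR n + 1 -> frac_part x = x - INR n.
Proof.
  intros Hx. unfold frac_part.
  replace (Int_part x) with (Z.of_nat n); [rewrite <- INR_IZR_INZ; ring|].
  apply Int_part_spec. rewrite <- INR_IZR_INZ. lra.
Qed.

Lemma frac_part_bounds x : 0 <= frac_part x < 1.
Proof. destruct (base_fp x). lra. Qed.

Lemma ex_RInt_piecewise (f : R -> R) :
  (forall n : nat, (1 <= n)%nat -> exists h : R -> R,
     (forall x, INR n < x < INR n + 1 -> f x = h x) /\
     (forall x, INR n <= x <= INR n + 1 -> continuous h x)) ->
  forall b, 1 <= b -> ex_RInt f 1 b.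
Proof.
  intros Hpieces.
  assert (Hnat : forall (k : nat) b, 1 <= b <= INR k + 1 -> ex_RInt f 1 b).
  { induction k as [|k IH]; intros b Hb.
    - simpl in Hb. replace b with 1 by lra. apply ex_RInt_point.
    - rewrite S_INR in Hb. destruct (Rle_lt_dec b (INR k + 1)); [apply IH; lra|].
      apply ex_RInt_Chasles with (INR k + 1); [apply IH; pose proof (pos_INR k); lra|].
      destruct (Hpieces (S k) ltac:(lia)) as [h [Hfh Hh]]. rewrite S_INR in Hfh, Hh.
      apply ex_RInt_ext with h.
      + intros x Hx. rewrite Rmin_left, Rmax_right in Hx by lra. symmetry. apply Hfh. lra.
      + apply (ex_RInt_continuous (V:=R_CompleteNormedModule)). intros z Hz.
        rewrite Rmin_left, Rmax_right in Hz by lra. apply Hh. lra. }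
  intros b Hb. destruct (nfloor_ex b) as [k Hk]; [lra|]. apply (Hnat k). lra.
Qed.

Lemma ex_RInt_frac_comp (phi psi : R -> R) :
  (forall y, continuous phi y) -> (forall x, 0 < x -> continuous psi x) ->
  forall b, 1 <= b -> ex_RInt (fun x => phi (frac_part x) * psi x) 1 b.
Proof.
  intros Hphi Hpsi. apply ex_RInt_piecewise. intros n Hn.
  exists (fun x => phi (x - INR n) * psi x). split.
  - intros x Hx. now rewrite (frac_part_between n x Hx).
  - intros x Hx. apply le_INR in Hn. simpl in Hn.
    apply (continuous_mult (K:=R_AbsRing)); [|apply Hpsi; lra].
    apply (continuous_comp (fun y => y - INR n) phi); [|apply Hphi].
    apply (ex_derive_continuous (V:=R_NormedModule)). auto_derive. easy.
Qed.

Lemma exp_mul_ln_m2 x : 0 < x -> exp (-2 * ln x) = / x ^ 2.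
Proof.
  intros Hx. replace (-2 * ln x) with (- (ln x + ln x)) by ring.
  rewrite exp_Ropp, exp_plus, exp_ln by exact Hx. simpl. now rewrite Rmult_1_r.
Qed.

Lemma ln_nonneg x : 1 <= x -> 0 <= ln x.
Proof. intros Hx. rewrite <- ln_1. apply ln_le; lra. Qed.

Lemma powlog_div_sqr_nonneg x k : 1 <= x -> 0 <= ln x ^ k / x ^ 2.
Proof.
  intros Hx. apply Rdiv_le_0_compat; [apply pow_le, ln_nonneg, Hx | apply pow_lt; lra].
Qed.

Lemma ex_RInt_1_inf_frac_powlog (phi : R -> R) M k :
  (forall y, continuous phi y) -> (forall y, 0 <= y < 1 -> Rabs (phi y) <= M) ->
  exists l, is_RInt_1_inf (fun x => phi (frac_part x) * (ln x ^ k / x ^ 2)) l.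
Proof.
  intros Hphi Hbound.
  apply ex_RInt_1_inf_dominated with (fun x => M * (ln x ^ k * exp (- 2 * ln x)))
    (M * (INR (fact k) / (2 - 1) ^ S k)).
  - apply ex_RInt_frac_comp; auto. intros x Hx.
    apply (ex_derive_continuous (V:=R_NormedModule)). auto_derive. repeat split; nra.
  - intros x Hx. rewrite exp_mul_ln_m2 by lra. rewrite Rabs_mult.
    rewrite (Rabs_right (ln x ^ k / x ^ 2)) by (apply Rle_ge, powlog_div_sqr_nonneg; lra).
    change (ln x ^ k * / x ^ 2) with (ln x ^ k / x ^ 2).
    apply Rmult_le_compat_r; [apply powlog_div_sqr_nonneg; lra | apply Hbound, frac_part_bounds].
  - apply is_RInt_1_inf_scal, is_RInt_1_inf_powlog. lra.
Qed.

Lemma exp_taylor_remainder y K :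
  Rabs (exp y - sum_f_R0 (fun k => y ^ k / INR (fact k)) K)
  <= Rabs y ^ S K / INR (fact (S K)) * exp (Rabs y).
Proof.
  (* Lagrange's form of the remainder for [t |-> exp (y t)] on [0, 1] *)
  assert (Hder : forall k t, is_derive_n (fun t => exp (y * t)) k t (y ^ k * exp (y * t))).
  { induction k as [|k IH]; intros t; [simpl; ring|]. simpl.
    apply is_derive_ext with (fun t => y ^ k * exp (y * t)).
    { intros u. symmetry. apply is_derive_n_unique, IH. }
    auto_derive; [easy | ring]. }
  destruct (Taylor_Lagrange (fun t => exp (y * t)) K 0 1 Rlt_0_1) as [z [Hz Htaylor]].
  { intros t _ k _. destruct k as [|k]; [exact I|].
    exists (y ^ S k * exp (y * t)). exact (Hder (S k) t). }
  rewrite !Rmult_1_r in Htaylor. rewrite Htaylor.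
  rewrite (sum_eq _ (fun k => y ^ k / INR (fact k))).
  2: { intros k _. rewrite (is_derive_n_unique _ _ _ _ (Hder k 0)), Rminus_0_r, Rmult_0_r,
         exp_0, pow1. field. apply INR_fact_neq_0. }
  rewrite (is_derive_n_unique _ _ _ _ (Hder (S K) z)), Rminus_0_r, pow1.
  match goal with |- Rabs (?A + ?B - ?A) <= _ =>
    replace (A + B - A) with (y ^ S K / INR (fact (S K)) * exp (y * z)) by
      (field; apply INR_fact_neq_0) end.
  pose proof (INR_fact_lt_0 (S K)).
  rewrite Rabs_mult, Rabs_div, <- RPow_abs, (Rabs_right (INR _)), (Rabs_right (exp _))
    by (try apply Rgt_ge; try apply exp_pos; lra).
  apply Rmult_le_compat_l; [apply Rdiv_le_0_compat; [apply pow_le, Rabs_pos | lra]|].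
  assert (Hyz : y * z <= Rabs y).
  { apply Rle_trans with (Rabs (y * z)); [apply Rle_abs|].
    rewrite Rabs_mult, (Rabs_right z) by lra.
    rewrite <- (Rmult_1_r (Rabs y)) at 2. apply Rmult_le_compat_l; [apply Rabs_pos | lra]. }
  destruct Hyz as [Hyz | ->]; [left; now apply exp_increasing | right; reflexivity].
Qed.

Definition frac_powlog (m : nat) (x : R) : R := frac_part x * (ln x ^ m / x ^ 2).

Lemma ex_RInt_frac_powlog m b : 1 <= b -> ex_RInt (frac_powlog m) 1 b.
Proof.
  apply (ex_RInt_frac_comp (fun y => y) (fun x => ln x ^ m / x ^ 2)).
  - intros y. apply continuous_id.
  - intros x Hx. apply (ex_derive_continuous (V:=R_NormedModule)). auto_derive. nra.
Qed.

Lemma is_RInt_1_inf_frac_powlog m : is_RInt_1_inf (frac_powlog m) (int_1_inf (frac_powlog m)).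
Proof.
  apply is_RInt_1_inf_int, (ex_RInt_1_inf_frac_powlog (fun y => y) 1).
  - intros y. apply continuous_id.
  - intros y Hy. apply Rabs_le_between. lra.
Qed.

Lemma powlog_prim_2 j x : 0 < x ->
  powlog_prim 2 j x = - INR (fact j) / x * sum_f_R0 (fun i => ln x ^ i / INR (fact i)) j.
Proof.
  intros Hx. assert (Hexp : exp ((1 - 2) * ln x) = / x).
  { replace ((1 - 2) * ln x) with (- ln x) by ring. now rewrite exp_Ropp, exp_ln. }
  induction j as [|j IH].
  - simpl. rewrite Hexp. field. lra.
  - cbn [powlog_prim sum_f_R0]. rewrite IH, Hexp, fact_simpl, mult_INR.
    assert (INR (fact j) <> 0) by apply INR_fact_neq_0.
    assert (INR (S j) <> 0) by (apply not_0_INR; lia).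
    field. repeat split; auto; lra.
Qed.

Lemma RInt_frac_powlog_unit m (n : nat) : (1 <= n)%nat ->
  RInt (frac_powlog m) (INR n) (INR n + 1) =
  (ln (INR n + 1) ^ S m / INR (S m) - INR n * powlog_prim 2 m (INR n + 1))
  - (ln (INR n) ^ S m / INR (S m) - INR n * powlog_prim 2 m (INR n)).
Proof.
  intros Hn. apply le_INR in Hn. simpl in Hn.
  rewrite (RInt_ext (V:=R_CompleteNormedModule) _ (fun x => (x - INR n) * (ln x ^ m / x ^ 2))).
  2: { intros x Hx. rewrite Rmin_left, Rmax_right in Hx by lra.
       unfold frac_powlog. now rewrite (frac_part_between n x Hx). }
  apply is_RInt_unique, (is_RInt_derive (V:=R_CompleteNormedModule)
    (fun x => ln x ^ S m / INR (S m) - INR n * powlog_prim 2 m x)); intros x Hx;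
    rewrite Rmin_left, Rmax_right in Hx by lra.
  - assert (Hlog : is_derive (fun y => ln y ^ S m / INR (S m)) x (ln x ^ m / x)).
    { auto_derive; [lra|]. change (match m with O => 1 | S _ => INR m + 1 end) with (INR (S m)).
      assert (INR (S m) <> 0) by (apply not_0_INR; lia). field. lra. }
    replace ((x - INR n) * (ln x ^ m / x ^ 2)) with
      (ln x ^ m / x - INR n * (ln x ^ m * exp (- 2 * ln x)))
      by (rewrite exp_mul_ln_m2 by lra; field; lra).
    exact (is_derive_minus _ _ x _ _ Hlog
             (is_derive_scal _ x _ _ (is_derive_powlog_prim 2 m x ltac:(lra) ltac:(lra)))).
  - apply (ex_derive_continuous (V:=R_NormedModule)). auto_derive. nra.
Qed.

(* [ring] and [field] only see equalities stated at type [R], not at a structure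
   whose carrier is [R]. *)
Ltac change_eq_R := match goal with |- ?a = ?b => change (@eq R a b) end.

Lemma RInt_frac_powlog_nat m n :
  RInt (frac_powlog m) 1 (INR (S n)) =
  ln (INR (S n)) ^ S m / INR (S m) - INR (S n) * powlog_prim 2 m (INR (S n))
  + sum_f_R0 (fun i => powlog_prim 2 m (INR (S i))) n.
Proof.
  induction n as [|n IH].
  - cbn [sum_f_R0]. change (INR 1) with 1.
    rewrite (RInt_point 1 (frac_powlog m)), ln_1, pow_i by lia.
    change (@zero R_CompleteNormedModule) with 0. change_eq_R. unfold Rdiv. ring.
  - assert (Hn : 1 <= INR (S n)) by (apply (le_INR 1); lia).
    rewrite <- (RInt_Chasles_R _ 1 (INR (S n)) (INR (S (S n)))).
    + change_eq_R.
      rewrite IH, RInt_frac_powlog_unit by lia. cbn [sum_f_R0]. rewrite (S_INR (S n)). ring.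
    + now apply ex_RInt_frac_powlog.
    + apply (ex_RInt_Chasles_2 (V:=R_CompleteNormedModule)) with 1.
      * split; [exact Hn | apply le_INR; lia].
      * apply ex_RInt_frac_powlog. rewrite S_INR. lra.
Qed.

Lemma sum_f_R0_switch (a : nat -> nat -> R) N M :
  sum_f_R0 (fun i => sum_f_R0 (a i) M) N = sum_f_R0 (fun k => sum_f_R0 (fun i => a i k) N) M.
Proof.
  induction N as [|N IH]; [reflexivity|].
  cbn [sum_f_R0]. rewrite IH, <- plus_sum. reflexivity.
Qed.

Definition stieltjes_seq (k n : nat) : R :=
  sum_f_R0 (fun j => ln (INR (j + 1)) ^ k / INR (j + 1)) n
  - ln (INR (n + 1)) ^ (k + 1) / INR (k + 1).

Lemma RInt_frac_powlog_stieltjes m n :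
  RInt (frac_powlog m) 1 (INR (S n))
  = INR (fact m) - INR (fact m) * sum_f_R0 (fun k => stieltjes_seq k n / INR (fact k)) m.
Proof.
  assert (Hfact : forall k, INR (fact k) <> 0) by apply INR_fact_neq_0.
  assert (HS : forall k, INR (S k) <> 0) by (intros k; apply not_0_INR; lia).
  set (L := ln (INR (S n))).
  assert (Hprim : sum_f_R0 (fun i => powlog_prim 2 m (INR (S i))) n
      = - INR (fact m) * sum_f_R0 (fun k => sum_f_R0
            (fun j => ln (INR (j + 1)) ^ k / INR (j + 1)) n / INR (fact k)) m).
  { transitivity (sum_f_R0 (fun i => sum_f_R0 (fun k =>
        - INR (fact m) / INR (fact k) * (ln (INR (i + 1)) ^ k / INR (i + 1))) m) n).
    { apply sum_eq. intros i _. rewrite Nat.add_1_r, powlog_prim_2 by (apply lt_0_INR; lia).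
      rewrite scal_sum. apply sum_eq. intros k _. field. auto. }
    rewrite sum_f_R0_switch, scal_sum. apply sum_eq. intros k _.
    transitivity (- INR (fact m) / INR (fact k)
                  * sum_f_R0 (fun j => ln (INR (j + 1)) ^ k / INR (j + 1)) n).
    - rewrite scal_sum. apply sum_eq. intros; ring.
    - field. auto. }
  assert (Hshift : sum_f_R0 (fun k => L ^ (k + 1) / INR (k + 1) / INR (fact k)) m
                   = sum_f_R0 (fun k => L ^ k / INR (fact k)) m - 1 + L ^ S m / INR (fact (S m))).
  { transitivity (sum_f_R0 (fun k => L ^ k / INR (fact k)) (S m) - 1); [|rewrite tech5; ring].
    rewrite (decomp_sum _ (S m)) by lia. cbn [pred].
    replace (L ^ 0 / INR (fact 0)) with 1 by (simpl; field).
    rewrite (sum_eq _ (fun i => L ^ S i / INR (fact (S i)))); [ring|].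
    intros k _. rewrite Nat.add_1_r, fact_simpl, mult_INR. field. auto. }
  assert (Hseq : sum_f_R0 (fun k => stieltjes_seq k n / INR (fact k)) m
     = sum_f_R0 (fun k => sum_f_R0
          (fun j => ln (INR (j + 1)) ^ k / INR (j + 1)) n / INR (fact k)) m
       - sum_f_R0 (fun k => L ^ (k + 1) / INR (k + 1) / INR (fact k)) m).
  { rewrite <- minus_sum. apply sum_eq. intros k _.
    unfold stieltjes_seq, L. rewrite !Nat.add_1_r. field. auto. }
  rewrite RInt_frac_powlog_nat, Hprim, powlog_prim_2, Hseq, Hshift, fact_simpl, mult_INR
    by (apply lt_0_INR; lia).
  fold L. change_eq_R. field. split; auto.
Qed.

Lemma stieltjes_of_lim k (l : R) : is_lim_seq (stieltjes_seq k) l -> stieltjes k = l.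
Proof.
  intros Hl. unfold stieltjes. fold (stieltjes_seq k). now rewrite (is_lim_seq_unique _ _ Hl).
Qed.

(* The weighted sums [sum_(k <= m) gamma_k / k!] are determined by their successive
   differences, which isolate one Stieltjes constant at a time. *)
Lemma sum_stieltjes_of_lim (T : nat -> R) :
  (forall m, is_lim_seq (fun n => sum_f_R0 (fun k => stieltjes_seq k n / INR (fact k)) m) (T m)) ->
  forall m, sum_f_R0 (fun k => stieltjes k / INR (fact k)) m = T m.
Proof.
  intros HT. induction m as [|m IH].
  - simpl. rewrite (stieltjes_of_lim 0 (T 0%nat)); [field|].
    refine (is_lim_seq_ext _ _ _ _ (HT 0%nat)). intros n. simpl. field.
  - cbn [sum_f_R0]. rewrite IH, (stieltjes_of_lim (S m) (INR (fact (S m)) * (T (S m) - T m))).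
    + field. apply INR_fact_neq_0.
    + refine (is_lim_seq_ext _ _ _ _
        (is_lim_seq_scal_l _ (INR (fact (S m))) _ (is_lim_seq_minus' _ _ _ _ (HT (S m)) (HT m)))).
      intros n. cbn [sum_f_R0]. field. apply INR_fact_neq_0.
Qed.

Lemma sum_stieltjes m :
  sum_f_R0 (fun k => stieltjes k / INR (fact k)) m = 1 - int_1_inf (frac_powlog m) / INR (fact m).
Proof.
  apply (sum_stieltjes_of_lim (fun m => 1 - int_1_inf (frac_powlog m) / INR (fact m))). clear m.
  intros m. assert (Hfact : INR (fact m) <> 0) by apply INR_fact_neq_0.
  assert (Hlim := proj1 (is_lim_seq_incr_1 _ _)
    (is_RInt_1_inf_seq _ _ (is_RInt_1_inf_frac_powlog m))).
  replace (1 - int_1_inf (frac_powlog m) / INR (fact m))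
    with (1 + - / INR (fact m) * int_1_inf (frac_powlog m)) by (field; exact Hfact).
  refine (is_lim_seq_ext _ _ _ _
    (is_lim_seq_plus' _ _ _ _ (is_lim_seq_const 1)
       (is_lim_seq_scal_l _ (- / INR (fact m)) _ Hlim))).
  intros n. cbv beta. rewrite RInt_frac_powlog_stieltjes. field. exact Hfact.
Qed.

Definition bernoulli2 (y : R) : R := y ^ 2 - y + 1 / 6.

Lemma bernoulli2_bound y : 0 <= y < 1 -> Rabs (bernoulli2 y) <= 1 / 6.
Proof. intros Hy. apply Rabs_le_between. unfold bernoulli2. split; nra. Qed.

Lemma continuous_bernoulli2 y : continuous bernoulli2 y.
Proof. apply (ex_derive_continuous (V:=R_NormedModule)). unfold bernoulli2. auto_derive. easy. Qed.

Definition bernoulli_powlog (k : nat) (x : R) : R := bernoulli2 (frac_part x) * (ln x ^ k / x ^ 2).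

Lemma is_RInt_1_inf_bernoulli_powlog k :
  is_RInt_1_inf (bernoulli_powlog k) (int_1_inf (bernoulli_powlog k)).
Proof.
  apply is_RInt_1_inf_int.
  exact (ex_RInt_1_inf_frac_powlog bernoulli2 (1 / 6) k continuous_bernoulli2 bernoulli2_bound).
Qed.

Lemma int_1_inf_bernoulli_powlog_bound k :
  Rabs (int_1_inf (bernoulli_powlog k)) <= 1 / 6 * INR (fact k).
Proof.
  replace (1 / 6 * INR (fact k)) with (1 / 6 * (INR (fact k) / (2 - 1) ^ S k))
    by (replace (2 - 1) with 1 by ring; rewrite pow1; field).
  apply is_RInt_1_inf_abs_le with (bernoulli_powlog k)
    (fun x => 1 / 6 * (ln x ^ k * exp (- 2 * ln x))).
  - intros x Hx. unfold bernoulli_powlog. rewrite exp_mul_ln_m2, Rabs_mult by lra.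
    rewrite (Rabs_right (ln x ^ k / x ^ 2)) by (apply Rle_ge, powlog_div_sqr_nonneg, Hx).
    apply Rmult_le_compat_r; [apply powlog_div_sqr_nonneg, Hx|].
    apply bernoulli2_bound, frac_part_bounds.
  - apply is_RInt_1_inf_bernoulli_powlog.
  - apply is_RInt_1_inf_scal, is_RInt_1_inf_powlog. lra.
Qed.

(* Taylor coefficients at [s = 0] of [int_1^oo B_2({x}) x^(-s-2) dx]. *)
Definition bernoulli_coef (k : nat) : R := (-1) ^ k * int_1_inf (bernoulli_powlog k) / INR (fact k).

Lemma bernoulli_coef_bound k : Rabs (bernoulli_coef k) <= 1 / 6.
Proof.
  pose proof (int_1_inf_bernoulli_powlog_bound k). pose proof (INR_fact_lt_0 k).
  unfold bernoulli_coef. rewrite Rabs_div, Rabs_mult, pow_1_abs, Rmult_1_l, (Rabs_right (INR _))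
    by lra.
  apply Rmult_le_reg_r with (INR (fact k)); [lra|]. unfold Rdiv. rewrite Rmult_assoc, Rinv_l; lra.
Qed.

Lemma is_RInt_1_inf_bernoulli_taylor s K :
  is_RInt_1_inf (fun x => bernoulli2 (frac_part x)
                   * (sum_f_R0 (fun k => (- s * ln x) ^ k / INR (fact k)) K / x ^ 2))
    (sum_f_R0 (fun k => bernoulli_coef k * s ^ k) K).
Proof.
  induction K as [|K IH].
  - apply is_RInt_1_inf_ext with (bernoulli_powlog 0).
    + intros x Hx. unfold bernoulli_powlog. simpl. field. lra.
    + replace (sum_f_R0 _ 0) with (int_1_inf (bernoulli_powlog 0))
        by (unfold bernoulli_coef; simpl; field).
      apply is_RInt_1_inf_bernoulli_powlog.
  - assert (Hfact : INR (fact (S K)) <> 0) by apply INR_fact_neq_0.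
    replace (sum_f_R0 _ (S K)) with (sum_f_R0 (fun k => bernoulli_coef k * s ^ k) K
        + (- s) ^ S K / INR (fact (S K)) * int_1_inf (bernoulli_powlog (S K)))
      by (cbn [sum_f_R0]; unfold bernoulli_coef; replace (- s) with (-1 * s) by ring;
          rewrite Rpow_mult_distr; field; exact Hfact).
    eapply is_RInt_1_inf_ext;
      [|exact (is_RInt_1_inf_plus _ _ _ _ IH
               (is_RInt_1_inf_scal _ _ _ (is_RInt_1_inf_bernoulli_powlog (S K))))].
    intros x Hx. unfold bernoulli_powlog. cbn [sum_f_R0]. rewrite Rpow_mult_distr. field. lra.
Qed.

Definition zeta_integrand (s x : R) : R := bernoulli2 (frac_part x) * Rpower x (- s - 2).

Lemma zeta_integrand_exp s x :
  0 < x -> zeta_integrand s x = bernoulli2 (frac_part x) * (exp (- s * ln x) / x ^ 2).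
Proof.
  intros Hx. unfold zeta_integrand, Rpower. f_equal.
  replace ((- s - 2) * ln x) with (- s * ln x + -2 * ln x) by ring.
  now rewrite exp_plus, exp_mul_ln_m2.
Qed.

Lemma ex_RInt_1_inf_zeta_integrand s : -1 < s -> exists l, is_RInt_1_inf (zeta_integrand s) l.
Proof.
  intros Hs.
  apply ex_RInt_1_inf_dominated with (fun x => 1 / 6 * (ln x ^ 0 * exp (- (s + 2) * ln x)))
    (1 / 6 * (INR (fact 0) / (s + 2 - 1) ^ 1)).
  - apply ex_RInt_frac_comp; [apply continuous_bernoulli2|].
    intros x Hx. apply (ex_derive_continuous (V:=R_NormedModule)). unfold Rpower.
    auto_derive. lra.
  - intros x Hx. unfold zeta_integrand, Rpower. rewrite Rabs_mult, (Rabs_right (exp _))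
      by (left; apply exp_pos).
    replace ((- s - 2) * ln x) with (- (s + 2) * ln x) by ring. rewrite pow_O, Rmult_1_l.
    apply Rmult_le_compat_r; [left; apply exp_pos | apply bernoulli2_bound, frac_part_bounds].
  - apply is_RInt_1_inf_scal, is_RInt_1_inf_powlog. lra.
Qed.

Lemma zeta_integrand_taylor_bound s K x : 1 <= x ->
  Rabs (zeta_integrand s x - bernoulli2 (frac_part x)
          * (sum_f_R0 (fun k => (- s * ln x) ^ k / INR (fact k)) K / x ^ 2))
  <= 1 / 6 * (Rabs s ^ S K / INR (fact (S K)) * (ln x ^ S K * exp (- (2 - Rabs s) * ln x))).
Proof.
  intros Hx. rewrite zeta_integrand_exp by lra.
  assert (Hln : 0 <= ln x) by now apply ln_nonneg.
  assert (Hx2 : 0 < / x ^ 2) by (apply Rinv_0_lt_compat, pow_lt; lra).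
  set (y := - s * ln x).
  assert (Hy : Rabs y = Rabs s * ln x)
    by (unfold y; rewrite Rabs_mult, Rabs_Ropp, (Rabs_right (ln x)); lra).
  replace (exp (- (2 - Rabs s) * ln x)) with (exp (Rabs y) * / x ^ 2)
    by (rewrite Hy, <- exp_mul_ln_m2, <- exp_plus by lra; f_equal; ring).
  replace (bernoulli2 (frac_part x) * (exp y / x ^ 2)
           - bernoulli2 (frac_part x) * (sum_f_R0 (fun k => y ^ k / INR (fact k)) K / x ^ 2))
    with (bernoulli2 (frac_part x)
          * ((exp y - sum_f_R0 (fun k => y ^ k / INR (fact k)) K) * / x ^ 2))
    by (field; lra).
  replace (1 / 6 * (Rabs s ^ S K / INR (fact (S K)) * (ln x ^ S K * (exp (Rabs y) * / x ^ 2))))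
    with (1 / 6 * ((Rabs y ^ S K / INR (fact (S K)) * exp (Rabs y)) * / x ^ 2))
    by (rewrite Hy, Rpow_mult_distr; field; split; [lra | apply INR_fact_neq_0]).
  rewrite Rabs_mult, Rabs_mult, (Rabs_right (/ x ^ 2)) by lra.
  apply Rmult_le_compat; [apply Rabs_pos | apply Rmult_le_pos; [apply Rabs_pos | lra] | |].
  - apply bernoulli2_bound, frac_part_bounds.
  - apply Rmult_le_compat_r; [lra | apply exp_taylor_remainder].
Qed.

Lemma is_pseries_of_geometric_bound (a : nat -> R) x l C q :
  0 <= q < 1 -> (forall K, Rabs (l - sum_f_R0 (fun k => a k * x ^ k) K) <= C * q ^ S K) ->
  is_pseries a x l.
Proof.
  intros Hq Hbound.
  assert (Hlim : is_lim_seq (fun K => C * q ^ S K) 0).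
  { replace (Finite 0) with (Finite (C * 0)) by (f_equal; ring).
    apply (is_lim_seq_scal_l _ C 0), (is_lim_seq_incr_1 (fun K => q ^ K) 0), is_lim_seq_geom.
    rewrite Rabs_right; lra. }
  assert (Hsum : is_lim_seq (fun K => sum_f_R0 (fun k => a k * x ^ k) K) l).
  { apply is_lim_seq_le_le with (fun K => l - C * q ^ S K) (fun K => l + C * q ^ S K).
    - intros K. apply Rabs_le_between'. rewrite Rabs_minus_sym. apply Hbound.
    - replace (Finite l) with (Rbar_minus l 0) by (simpl; f_equal; ring).
      apply is_lim_seq_minus'; [apply is_lim_seq_const | exact Hlim].
    - replace (Finite l) with (Rbar_plus l 0) by (simpl; f_equal; ring).
      apply is_lim_seq_plus'; [apply is_lim_seq_const | exact Hlim]. }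
  apply (is_lim_seq_ext _ (sum_n (fun k => scal (pow_n x k) (a k))) l) in Hsum; [exact Hsum|].
  intros K. rewrite sum_n_Reals. apply sum_eq. intros k _.
  unfold scal; simpl. unfold mult; simpl. rewrite (pow_n_pow x k). ring.
Qed.

Lemma is_pseries_int_1_inf_zeta_integrand s : Rabs s < 1 / 2 ->
  is_pseries bernoulli_coef s (int_1_inf (zeta_integrand s)).
Proof.
  intros Hs. pose proof (Rabs_pos s) as Hs0.
  destruct (ex_RInt_1_inf_zeta_integrand s) as [l Hl];
    [pose proof (proj1 (Rabs_lt_between s (1 / 2)) Hs); lra|].
  rewrite (is_RInt_1_inf_unique _ _ Hl).
  apply is_pseries_of_geometric_bound with (1 / 6 / (1 - Rabs s)) (Rabs s / (1 - Rabs s)).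
  { split; [apply Rdiv_le_0_compat | apply (Rdiv_lt_1 (Rabs s) (1 - Rabs s))]; lra. }
  intros K.
  replace (1 / 6 / (1 - Rabs s) * (Rabs s / (1 - Rabs s)) ^ S K) with
    (1 / 6 * (Rabs s ^ S K / INR (fact (S K)) * (INR (fact (S K)) / (2 - Rabs s - 1) ^ S (S K)))).
  2: { replace (2 - Rabs s - 1) with (1 - Rabs s) by ring.
       unfold Rdiv. rewrite Rpow_mult_distr, pow_inv, <- (tech_pow_Rmult (1 - Rabs s) (S K)).
       field. repeat split; try lra; [apply pow_nonzero; lra | apply INR_fact_neq_0]. }
  apply is_RInt_1_inf_abs_le with
    (fun x => zeta_integrand s x - bernoulli2 (frac_part x)
                * (sum_f_R0 (fun k => (- s * ln x) ^ k / INR (fact k)) K / x ^ 2))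
    (fun x => 1 / 6 * (Rabs s ^ S K / INR (fact (S K))
                       * (ln x ^ S K * exp (- (2 - Rabs s) * ln x)))).
  - intros x Hx. now apply zeta_integrand_taylor_bound.
  - apply is_RInt_1_inf_minus; [exact Hl | apply is_RInt_1_inf_bernoulli_taylor].
  - apply is_RInt_1_inf_scal, is_RInt_1_inf_scal, is_RInt_1_inf_powlog. lra.
Qed.

Definition zeta_coef (k : nat) : R :=
  match k with
  | O => -1 + 1 / 2
  | 1 => -1 + 1 / 12 - bernoulli_coef 0 / 2
  | S (S j) => -1 - (bernoulli_coef (S j) + bernoulli_coef j) / 2
  end.

Definition const_coef (c : R) (k : nat) : R := match k with O => c | _ => 0 end.

Lemma is_pseries_const_coef c s : is_pseries (const_coef c) s c.
Proof.
  assert (Hsum : is_lim_seq (sum_n (fun k => scal (pow_n s k) (const_coef c k))) c).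
  { apply (is_lim_seq_ext (fun _ => c)); [|apply is_lim_seq_const].
    intros N. rewrite sum_n_Reals. induction N as [|N IH]; cbn [sum_f_R0].
    - unfold scal; simpl. unfold mult, one; simpl. ring.
    - rewrite <- IH. unfold scal; simpl. unfold mult; simpl. ring. }
  exact Hsum.
Qed.

Lemma is_pseries_geom_coef s : Rabs s < 1 -> is_pseries (fun _ => 1) s (/ (1 - s)).
Proof.
  intros Hs. apply is_series_ext with (fun n => s ^ n); [|now apply is_series_geom].
  intros n. change (scal (pow_n s n) 1) with (pow_n s n * 1).
  rewrite Rmult_1_r. symmetry. apply pow_n_pow.
Qed.

Lemma is_pseries_zeta s : Rabs s < 1 / 2 -> is_pseries zeta_coef s (zeta s).
Proof.
  intros Hs. pose proof (proj1 (Rabs_lt_between s (1 / 2)) Hs) as Hs'.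
  set (J := int_1_inf (zeta_integrand s)).
  assert (HJ : is_pseries bernoulli_coef s J) by now apply is_pseries_int_1_inf_zeta_integrand.
  (* [zeta s = - 1 / (1 - s) + 1 / 2 + s / 12 - (s J + s^2 J) / 2] *)
  assert (Hpolar := is_pseries_scal (-1) _ s _ (Rmult_comm _ _)
                     (is_pseries_geom_coef s ltac:(lra))).
  assert (Hpoly := is_pseries_plus _ _ s _ _ (is_pseries_const_coef (1 / 2) s)
                     (is_pseries_incr_1 _ s _ (is_pseries_const_coef (1 / 12) s))).
  assert (HsJ := is_pseries_incr_1 _ s _ HJ).
  assert (Hs2J := is_pseries_incr_1 _ s _ HsJ).
  assert (Hall := is_pseries_plus _ _ s _ _ (is_pseries_plus _ _ s _ _ Hpolar Hpoly)
                    (is_pseries_scal (-1 / 2) _ s _ (Rmult_comm _ _)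
                       (is_pseries_plus _ _ s _ _ HsJ Hs2J))).
  replace (zeta s) with (plus (plus (scal (-1) (/ (1 - s))) (plus (1 / 2) (scal s (1 / 12))))
                          (scal (-1 / 2) (plus (scal s J) (scal s (scal s J))))).
  - apply (is_pseries_ext _ zeta_coef) in Hall; [exact Hall|].
    intros [|[|j]]; unfold PS_plus, PS_scal, PS_incr_1, const_coef, zeta_coef;
      unfold plus, scal, zero; simpl; unfold mult; simpl; change_eq_R; field.
  - unfold zeta. change (fun x => _) with (zeta_integrand s). fold J.
    unfold plus, scal; simpl. unfold mult; simpl. field. lra.
Qed.

Lemma CV_radius_zeta_coef_pos : Rbar_lt 0 (CV_radius zeta_coef).
Proof.
  assert (Hbound : forall k, Rabs (zeta_coef k) <= 2).
  { intros [|[|j]]; apply Rabs_le_between; unfold zeta_coef; [lra| |].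
    - pose proof (proj1 (Rabs_le_between _ _) (bernoulli_coef_bound 0)). lra.
    - pose proof (proj1 (Rabs_le_between _ _) (bernoulli_coef_bound j)).
      pose proof (proj1 (Rabs_le_between _ _) (bernoulli_coef_bound (S j))). lra. }
  assert (Hle : Rbar_le 1 (CV_radius zeta_coef)).
  { apply (proj1 (CV_radius_bounded zeta_coef)). exists 2. intros n.
    rewrite pow1, Rmult_1_r. apply Hbound. }
  destruct (CV_radius zeta_coef); simpl in *; auto; lra.
Qed.

Lemma Derive_n_zeta_0 k : Derive_n zeta k 0 = zeta_coef k * INR (fact k).
Proof.
  rewrite (Derive_n_ext_loc zeta (PSeries zeta_coef) k 0).
  - apply Derive_n_coef, CV_radius_zeta_coef_pos.
  - assert (Hpos : 0 < 1 / 2) by lra. exists (mkposreal _ Hpos). intros t Ht.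
    change (Rabs (t - 0) < 1 / 2) in Ht. rewrite Rminus_0_r in Ht.
    symmetry. now apply is_pseries_unique, is_pseries_zeta.
Qed.

Lemma sum_alt_zeta_coef m :
  sum_f_R0 (fun k => (-1) ^ k * zeta_coef k) (S m)
  = - (1 - (-1) ^ m) / 2 + 5 / 12 + int_1_inf (bernoulli_powlog m) / INR (fact m) / 2.
Proof.
  assert (Hsign : forall k,
            (-1) ^ k * bernoulli_coef k = int_1_inf (bernoulli_powlog k) / INR (fact k)).
  { intros k. unfold bernoulli_coef.
    assert (Hsq : (-1) ^ k * (-1) ^ k = 1)
      by (rewrite <- Rpow_mult_distr; replace (-1 * -1) with 1 by ring; apply pow1).
    transitivity ((-1) ^ k * (-1) ^ k * (int_1_inf (bernoulli_powlog k) / INR (fact k))).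
    - field. apply INR_fact_neq_0.
    - rewrite Hsq. ring. }
  rewrite <- Hsign. induction m as [|m IH].
  - simpl. field.
  - cbn [sum_f_R0]. cbn [sum_f_R0] in IH. rewrite IH. unfold zeta_coef. simpl. field.
Qed.

Lemma int_1_inf_frac_sqr_powlog m :
  int_1_inf (fun x => frac_part x ^ 2 * ln x ^ m / x ^ 2)
  = int_1_inf (bernoulli_powlog m) + int_1_inf (frac_powlog m) - 1 / 6 * INR (fact m).
Proof.
  apply is_RInt_1_inf_unique.
  replace (1 / 6 * INR (fact m)) with (1 / 6 * (INR (fact m) / (2 - 1) ^ S m))
    by (replace (2 - 1) with 1 by ring; rewrite pow1; field).
  apply is_RInt_1_inf_ext
    with (fun x => bernoulli_powlog m x + frac_powlog m x - 1 / 6 * (ln x ^ m * exp (-2 * ln x))).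
  - intros x Hx. unfold bernoulli_powlog, frac_powlog, bernoulli2.
    rewrite exp_mul_ln_m2 by lra. field. lra.
  - apply is_RInt_1_inf_minus; [apply is_RInt_1_inf_plus|].
    + apply is_RInt_1_inf_bernoulli_powlog.
    + apply is_RInt_1_inf_frac_powlog.
    + apply is_RInt_1_inf_scal, is_RInt_1_inf_powlog. lra.
Qed.

Theorem theorem3p1 (m : nat) :
  / INR (fact m) * int_1_inf (fun x => frac_part x ^ 2 * ln x ^ m / x ^ 2)
  = 1 - (-1) ^ m
    + 2 * sum_f_R0 (fun k => (-1) ^ k * Derive_n zeta k 0 / INR (fact k)) (m + 1)
    - sum_f_R0 (fun k => stieltjes k / INR (fact k)) m.
Proof.
  rewrite (sum_eq _ (fun k => (-1) ^ k * zeta_coef k))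
    by (intros k _; rewrite Derive_n_zeta_0; field; apply INR_fact_neq_0).
  rewrite Nat.add_1_r, sum_alt_zeta_coef, sum_stieltjes, int_1_inf_frac_sqr_powlog.
  field. apply INR_fact_neq_0.
Qed.
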